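(* Assume $\operatorname{rank}(X)=n$ and $\xi_r(\varpi^N)<1/2$ for some $r\in\{0,\ldots,N\}$. Let $A,A'\in\mathbb{R}^{n\times s}$ be comparable over $\varpi^N$ with associated permutation $\pi$ (i.e. $|I_i(A)\cap I_{\pi(i)}(A')|\ge\nu_n(X)$ for all $i\in\mathbb{S}$). Then for any norm $\|\cdot\|$ on $\mathbb{R}^{n\times s}$ there exists a number $D>0$ such that $$\|A'_\pi-A\|\le\frac{1}{D\big(1-2\xi_r(\varpi^N)\big)}\Big(\mathcal{J}(A')-\mathcal{J}(A)+2\delta_r(A)\Big),$$ where $A'_\pi=[a'_{\pi(1)}\ \cdots\ a'_{\pi(s)}]$.
   Context: Data: integers $n,s,N\ge1$ and a dataset $\varpi^N=((x_1,y_1),\ldots,(x_N,y_N))$ with $x_t\in\mathbb{R}^n$, $y_t\in\mathbb{R}$; $X=[x_1\ \cdots\ x_N]\in\mathbb{R}^{n\times N}$. Let $\mathbb{T}=\{1,\ldots,N\}$, $\mathbb{S}=\{1,\ldots,s\}$. For $A=[a_1\ \cdots\ a_s]\in\mathbb{R}^{n\times s}$, $\sigma_A:\mathbb{T}\to\mathbb{S}$ is a switching signal satisfying $\sigma_A(t)\in\arg\min_{i\in\mathbb{S}}|y_t-x_t^\top a_i|$ for all $t$, selected uniquely by a fixed rule depending only on $A$ and the data (among all admissible choices, one maximizing $\min_{i}|I_i(A)|$, ties then broken by assigning the smallest admissible index). $I_i(A)=\{t\in\mathbb{T}:\sigma_A(t)=i\}$. $\phi(A)=\big(y_1-x_1^\top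 a_{\sigma_A(1)},\ldots,y_N-x_N^\top a_{\sigma_A(N)}\big)^\top$, $\mathcal{J}(A)=\|\phi(A)\|_1=\sum_t\min_i|y_t-a_i^\top x_t|$, $\phi_{\mathcal{T}}(A)$ its subvector indexed by $\mathcal{T}\subset\mathbb{T}$. $\mathcal{S}_r=\{w\in\mathbb{R}^N:\|w\|_0\le r\}$, $\delta_r(A)=\inf_{w\in\mathcal{S}_r}\|\phi(A)-w\|_1$. The $r$-th concentration ratio is $$\xi_r(\varpi^N)=\sup\Big\{\frac{\|\phi_{\mathcal{T}}(A)-\phi_{\mathcal{T}}(A')\|_1}{\|\phi(A)-\phi(A')\|_1}: A,A'\in\mathbb{R}^{n\times s},\ \mathcal{T}\subset\mathbb{T},\ \phi(A)\ne\phi(A'),\ |\mathcal{T}|\le r\Big\}.$$ Genericity index: for $\operatorname{rank}(X)=n$, $\nu_n(X)$ is the smallest integer $m$ such that every submatrix $X_{\mathcal{S}}$ formed by $m$ columns of $X$ has rank $n$. Comparability: $A,A'$ are comparable over $\varpi^N$ if there is a permutation $\pi$ of $\mathbb{S}$ with $|I_i(A)\cap I_{\pi(i)}(A')|\ge\nu_n(X)$ for all $i$. *)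

From HB Require Import structures.
From mathcomp Require Import all_boot all_order all_algebra all_fingroup.
From mathcomp Require Import boolp classical_sets reals.
Set Implicit Arguments. Unset Strict Implicit. Unset Printing Implicit Defensive.
Import Order.TTheory GRing.Theory Num.Theory.
Local Open Scope ring_scope.

Section Switched.
Variables (R : realType) (n s N : nat).
(* Regressors: X = [x_1 ... x_N] (column t is x_t); outputs y t = y_t. *)
Variables (X : 'M[R]_(n, N)) (y : 'I_N -> R).

Definition resid (A : 'M[R]_(n, s)) (t : 'I_N) (i : 'I_s) : R :=
  y t - (X^T *m A) t i.

Definition admissible (A : 'M[R]_(n, s)) (sg : {ffun 'I_N -> 'I_s}) : bool :=
  [forall t, forall i, `|resid A t (sg t)| <= `|resid A t i|].

Definition Iset (sg : {ffun 'I_N -> 'I_s}) (i : 'I_s) : {set 'I_N} :=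
  [set t | sg t == i].

(* min_i |I_i| (N is the neutral value; all cardinals are <= N) *)
Definition mincard (sg : {ffun 'I_N -> 'I_s}) : nat :=
  \big[minn/N]_(i : 'I_s) #|Iset sg i|.

(* lexicographic code of (sg 1, ..., sg N) *)
Definition lexcode (sg : {ffun 'I_N -> 'I_s}) : nat :=
  \sum_(t : 'I_N) (sg t : nat) * s ^ (N - 1 - t).

Definition maxmincard (A : 'M[R]_(n, s)) : nat :=
  \max_(sg : {ffun 'I_N -> 'I_s} | admissible A sg) mincard sg.

Definition best_signals (A : 'M[R]_(n, s)) : {set {ffun 'I_N -> 'I_s}} :=
  [set sg | admissible A sg && (mincard sg == maxmincard A)].

(* the selected switching signal sigma_A: among the maximizers, the one
   assigning the smallest indices (lexicographically smallest).
   It is [Some _] whenever s >= 1. *)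
Definition sigmaA (A : 'M[R]_(n, s)) : option {ffun 'I_N -> 'I_s} :=
  [pick sg in best_signals A |
     [forall tau in best_signals A, (lexcode sg <= lexcode tau)%N]].

Definition I_ (A : 'M[R]_(n, s)) (i : 'I_s) : {set 'I_N} :=
  if sigmaA A is Some sg then Iset sg i else finset.set0.

Definition phi (A : 'M[R]_(n, s)) (t : 'I_N) : R :=
  if sigmaA A is Some sg then resid A t (sg t) else 0.

Definition J (A : 'M[R]_(n, s)) : R := \sum_(t : 'I_N) `|phi A t|.

Definition delta (r : nat) (A : 'M[R]_(n, s)) : R :=
  inf (fun d : R => exists w : 'I_N -> R,
         (#|[pred t : 'I_N | w t != 0%R]| <= r)%N /\ d = \sum_(t : 'I_N) `|phi A t - w t|).

Definition xi (r : nat) : R :=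
  sup (fun q : R => exists (A A' : 'M[R]_(n, s)) (T : {set 'I_N}),
         (#|T| <= r)%N /\ phi A <> phi A' /\
         q = (\sum_(t in T) `|phi A t - phi A' t|) /
             (\sum_(t : 'I_N) `|phi A t - phi A' t|)).

(* genericity index nu_n(X): smallest m such that every submatrix formed by
   m (distinct) columns of X has rank n (m ranges over 0..N). *)
Definition all_subm_full (m : nat) : bool :=
  [forall f : {ffun 'I_m -> 'I_N}, injectiveb f ==> (\rank (colsub f X) == n)].

Definition nu : nat := \big[minn/N]_(m < N.+1 | all_subm_full m) m.

Definition comparable_with (A A' : 'M[R]_(n, s)) (pi : {perm 'I_s}) : Prop :=
  forall i : 'I_s, (nu <= #|I_ A i :&: I_ A' (pi i)|)%N.

End Switched.

Definition is_norm (R : realType) (n s : nat) (nrm : 'M[R]_(n, s) -> R) : Prop :=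
  [/\ forall M, nrm M = 0 -> M = 0,
      forall (a : R) M, nrm (a *: M) = `|a| * nrm M
    & forall M1 M2, nrm (M1 + M2) <= nrm M1 + nrm M2].

From HB Require Import structures.
From mathcomp Require Import all_boot all_order all_algebra all_fingroup.
From mathcomp Require Import boolp classical_sets reals lra.
Set Implicit Arguments. Unset Strict Implicit. Unset Printing Implicit Defensive.
Import Order.TTheory GRing.Theory Num.Theory.
Local Open Scope ring_scope.

(* Write [e] for the l1 distance between the residual vectors phi(A) and
   phi(A').  Splitting the samples along the support of an r-sparse
   approximation w of phi(A) and using the triangle inequality on each part
   gives (1 - 2 xi_r) e <= J(A') - J(A) + 2 ||phi(A) - w||_1; taking the
   infimum over w bounds (1 - 2 xi_r) e by the numerator of the theorem.
   Comparability makes e positive as soon as A'_pi <> A: if phi(A) = phi(A'),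
   the columns a_i and a'_(pi i) interpolate the same outputs on at least
   nu_n(X) samples, hence on a full-rank set of regressors, so they coincide.
   One can then take D := e / ||A'_pi - A||. *)

Section NormFacts.
Variables (R : realType) (n s : nat) (nrm : 'M[R]_(n, s) -> R).
Hypothesis nrmP : is_norm nrm.

Lemma is_norm0 : nrm 0 = 0.
Proof. by case: nrmP => _ nrmZ _; rewrite -(scale0r 0) nrmZ normr0 mul0r. Qed.

Lemma is_norm_ge0 M : 0 <= nrm M.
Proof.
case: nrmP => _ nrmZ nrmD; have := nrmD M ((-1) *: M).
by rewrite nrmZ scaleN1r subrr is_norm0 normrN normr1 mul1r; lra.
Qed.

End NormFacts.

Lemma sum_split_support (R : realDomainType) (I : finType) (p p' w : I -> R) :
  \sum_t `|p t| + \sum_t `|p t - p' t|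
    - 2 * \sum_(t in [set t | w t != 0]) `|p t - p' t|
    - 2 * \sum_t `|p t - w t| <= \sum_t `|p' t|.
Proof.
set T := [set t | w t != 0].
have pointwise t : `|p t| + `|p t - p' t|
    - 2 * (if t \in T then `|p t - p' t| else 0)
    - 2 * (if t \in T then 0 else `|p t - w t|) <= `|p' t|.
  case: ifP => tT.
    by have := ler_normD (p' t) (p t - p' t); rewrite addrC subrK; lra.
  move: tT; rewrite inE => /negbFE/eqP ->; rewrite subr0.
  by have := ler_normB (p t) (p' t); lra.
have offT : \sum_t (if t \in T then 0 else `|p t - w t|) <= \sum_t `|p t - w t|.
  by apply: ler_sum => t _; case: ifP.
have := ler_sum (index_enum I) (fun t (_ : true) => pointwise t).
by rewrite !sumrB big_split /= -!mulr_sumr -big_mkcond; lra.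
Qed.

Section Switched.
Variables (R : realType) (n s N : nat) (X : 'M[R]_(n, N)) (y : 'I_N -> R).

Local Notation phi := (phi X y).
Local Notation dist1 A A' := (\sum_t `|phi A t - phi A' t|).

Lemma sum_on_sparse_le_xi (r : nat) (A A' : 'M[R]_(n, s)) (T : {set 'I_N}) :
  (#|T| <= r)%N ->
  \sum_(t in T) `|phi A t - phi A' t| <= xi s X y r * dist1 A A'.
Proof.
move=> Tr; have [e0|e_neq0] := eqVneq (dist1 A A') 0.
  rewrite e0 mulr0 big1 // => t _.
  exact: (psumr_eq0P (fun i _ => normr_ge0 _) e0).
have e_gt0 : 0 < dist1 A A' by rewrite lt0r e_neq0 sumr_ge0.
have phi_neq : phi A <> phi A'.
  move=> eq_phi; move: e_neq0; rewrite eq_phi.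
  by under eq_bigr do rewrite subrr normr0; rewrite big1 ?eqxx.
rewrite -ler_pdivrMr //; apply: ub_le_sup; last by exists A, A', T.
exists 1 => _ [B [B' [T' [_ [_ ->]]]]].
have partial_le : \sum_(t in T') `|phi B t - phi B' t| <= dist1 B B'.
  by rewrite [leRHS](bigID (mem T')) /= lerDl sumr_ge0.
have [->|total_neq0] := eqVneq (dist1 B B') 0; first by rewrite invr0 mulr0.
rewrite ler_pdivrMr ?mul1r // lt_neqAle eq_sym total_neq0 /=.
by apply: le_trans partial_le; rewrite sumr_ge0.
Qed.

Lemma dist1_le_delta (r : nat) (A A' : 'M[R]_(n, s)) :
  (1 - 2 * xi s X y r) * dist1 A A'
    <= J X y A' - J X y A + 2 * delta X y r A.
Proof.
suff : (1 - 2 * xi s X y r) * dist1 A A' - (J X y A' - J X y A)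
         <= 2 * delta X y r A by lra.
rewrite -ler_pdivrMl ?ltr0n //; apply: lb_le_inf.
  exists (\sum_t `|phi A t - 0|), (fun _ => 0); split=> //.
  by rewrite eq_card0 // => t; rewrite !inE eqxx.
move=> _ [w [wr ->]]; rewrite ler_pdivrMl ?ltr0n //.
have : (#|[set t | w t != 0%R]| <= r)%N by rewrite cardsE.
move=> /(sum_on_sparse_le_xi A A').
have := sum_split_support (phi A) (phi A') w.
by rewrite /J; lra.
Qed.

Lemma nu_spec : all_subm_full X (nu X) || (nu X == N).
Proof.
apply: (big_ind (fun m => all_subm_full X m || (m == N))).
- by rewrite eqxx orbT.
- by move=> a b Ha Hb; rewrite /minn; case: ifP.
- by move=> i ->.
Qed.

Lemma rowv_eq0_vanishing_on (S : {set 'I_N}) (u : 'rV[R]_n) :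
  \rank X = n -> (nu X <= #|S|)%N ->
  (forall t, t \in S -> (u *m X) 0 t = 0) -> u = 0.
Proof.
move=> rankX nuS uX0; case/orP: nu_spec => [/forallP full | /eqP nuN].
  pose f := [ffun k : 'I_(nu X) => enum_val (widen_ord nuS k)].
  have f_inj : injective f.
    by move=> a b; rewrite !ffunE => /enum_val_inj /(congr1 val) /= /val_inj.
  have /eqP rank_sub := implyP (full f) (introT (injectiveP f) f_inj).
  apply: (@row_free_inj _ 1 _ _ _ (introT eqP rank_sub)).
  rewrite mul0mx; apply/matrixP => i k; rewrite [i]ord1 [RHS]mxE.
  rewrite -(uX0 (f k)); last by rewrite ffunE enum_valP.
  by rewrite !mxE; apply: eq_bigr => j _; rewrite !mxE.
have S_full : S = [set: 'I_N]%SET.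
  by apply/eqP; rewrite eqEcard finset.subsetT cardsT card_ord -{1}nuN nuS.
apply: (@row_free_inj _ 1 _ _ X (introT eqP rankX)).
rewrite mul0mx; apply/matrixP => i k.
by rewrite [i]ord1 [RHS]mxE uX0 // S_full inE.
Qed.

Lemma colsub_eq_of_phi_eq (A A' : 'M[R]_(n, s)) (pi : {perm 'I_s}) :
  \rank X = n -> comparable_with X y A A' pi ->
  phi A =1 phi A' -> colsub pi A' = A.
Proof.
move=> rankX cmp eq_phi; apply/matrixP => k i; rewrite mxE.
pose u : 'rV[R]_n := \row_j (A j i - A' j (pi i)).
suff /matrixP/(_ 0 k) : u = 0.
  by rewrite !mxE => /eqP; rewrite subr_eq0 => /eqP.
apply: (rowv_eq0_vanishing_on rankX (cmp i)) => t; rewrite inE => /andP[].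
have := eq_phi t; rewrite /I_ /phi.
case: (sigmaA X y A) => [sg|]; last by rewrite inE.
case: (sigmaA X y A') => [sg'|]; last by move=> _ _; rewrite inE.
rewrite !inE /resid => eq_res /eqP sgt /eqP sg't.
move: eq_res; rewrite sgt sg't => /addrI/oppr_inj eq_fit.
have -> : (u *m X) 0 t = (X^T *m A) t i - (X^T *m A') t (pi i).
  rewrite !mxE -sumrB; apply: eq_bigr => j _; rewrite !mxE.
  by rewrite mulrBl !(mulrC (X j t)).
by rewrite eq_fit subrr.
Qed.

Lemma dist1_gt0 (A A' : 'M[R]_(n, s)) (pi : {perm 'I_s}) :
  \rank X = n -> comparable_with X y A A' pi -> colsub pi A' != A ->
  0 < dist1 A A'.
Proof.
move=> rankX cmp neqA; rewrite lt0r sumr_ge0 // andbT.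
apply: contra neqA => /eqP e0; apply/eqP/(colsub_eq_of_phi_eq rankX cmp) => t.
apply/eqP; rewrite -subr_eq0 -normr_eq0; apply/eqP.
exact: (psumr_eq0P (fun i _ => normr_ge0 _) e0).
Qed.

End Switched.

Theorem theorem2 (R : realType) (n s N : nat) (X : 'M[R]_(n, N)) (y : 'I_N -> R)
    (r : nat) :
  (1 <= n)%N -> (1 <= s)%N -> (1 <= N)%N -> (r <= N)%N ->
  \rank X = n ->
  xi s X y r < 1 / 2 ->
  forall (A A' : 'M[R]_(n, s)) (pi : {perm 'I_s}),
    comparable_with X y A A' pi ->
    forall nrm : 'M[R]_(n, s) -> R, is_norm nrm ->
    exists D : R, 0 < D /\
      nrm (colsub pi A' - A) <=
        (J X y A' - J X y A + 2 * delta X y r A) / (D * (1 - 2 * xi s X y r)).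
Proof.
move=> _ _ _ _ rankX xi_lt A A' pi cmp nrm nrmP.
have c_gt0 : 0 < 1 - 2 * xi s X y r by lra.
have bound := dist1_le_delta X y r A A'.
set e := \sum_t _ in bound; set M := nrm _.
have [eqA|neqA] := eqVneq (colsub pi A') A.
  exists 1; split=> //; rewrite /M eqA subrr is_norm0 // mul1r.
  apply: divr_ge0 (ltW c_gt0); apply: le_trans bound.
  by rewrite mulr_ge0 ?(ltW c_gt0) ?sumr_ge0.
have e_gt0 : 0 < e := dist1_gt0 rankX cmp neqA.
have M_gt0 : 0 < M.
  rewrite lt0r is_norm_ge0 // andbT; apply: contra neqA => /eqP M0.
  by case: nrmP => nrm_eq0 _ _; rewrite -subr_eq0 (nrm_eq0 _ M0).
exists (e / M); split; first by rewrite divr_gt0.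
rewrite ler_pdivlMr ?mulr_gt0 ?divr_gt0 ?invr_gt0 //.
by rewrite mulrA mulrCA divff ?gt_eqF // mulr1 mulrC.
Qed.
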